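(* Let $(\mathfrak g,\mathcal F_\bullet\mathfrak g,R)$ be a filtered Rota–Baxter Lie algebra over a field of characteristic zero. For every $n\ge1$, $\mathcal F_nU(\mathfrak g)=\mathcal F_nU(\mathfrak g_R)$ as subspaces of $U(\mathfrak g)$.
   Context: Filtered Rota–Baxter Lie algebra: a Lie algebra $\mathfrak g$ with subspaces $\mathfrak g=\mathcal F_1\mathfrak g\supset\mathcal F_2\mathfrak g\supset\cdots$, $[\mathcal F_n\mathfrak g,\mathcal F_m\mathfrak g]\subset\mathcal F_{n+m}\mathfrak g$, and a linear map $R$ with $[R(x),R(y)]=R([R(x),y]+[x,R(y)]+[x,y])$ and $R(\mathcal F_n\mathfrak g)\subset\mathcal F_n\mathfrak g$. Let $\mathcal R:U(\mathfrak g)\to U(\mathfrak g)$ be the well-defined linear map with $\mathcal R(1)=1$, $\mathcal R(x)=R(x)$, $\mathcal R(xh)=R(x)\mathcal R(h)-\mathcal R([R(x),h])$ ($x\in\mathfrak g$, $h\in U(\mathfrak g)$). Define $a\star b=a_{(1)}\mathcal R(a_{(2)})\,b\,S(\mathcal R(a_{(3)}))$ on $U(\mathfrak g)$ (Sweedler notation). The descendant Lie algebra $\mathfrak g_R$ is $\mathfrak g$ with bracket $[x,y]_R=[R(x),y]+[x,R(y)]+[x,y]$; the algebra $(U(\mathfrak g),\star)$ is identified with $U(\mathfrak g_R)$ (identity on $\mathfrak g$). $\mathcal F_nU(\mathfrak g)$ ($n\ge1$) is the span of products $x_1\cdots x_k$ in $U(\mathfrak g)$ with $k\ge1$, $x_i\in\mathcal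 F_{n_i}\mathfrak g$, $\sum n_i\ge n$; $\mathcal F_nU(\mathfrak g_R)$ is the span of $x_1\star x_2\star\cdots\star x_k$ with the same conditions. *)

From mathcomp Require Import all_boot all_order all_algebra.
Set Implicit Arguments. Unset Strict Implicit. Unset Printing Implicit Defensive.
Import GRing.Theory.
Local Open Scope ring_scope.

Section Defs.
Variable K : fieldType.

Definition is_lie_bracket (g : lmodType K) (br : g -> g -> g) : Prop :=
  [/\ forall (a : K) x y z, br (a *: x + y) z = a *: br x z + br y z,
      forall (a : K) x y z, br x (a *: y + z) = a *: br x y + br x z,
      forall x, br x x = 0
    & forall x y z, br x (br y z) + br y (br z x) + br z (br x y) = 0].

Definition is_subspace (V : lmodType K) (P : V -> Prop) : Prop :=
  P 0 /\ forall (a : K) x y, P x -> P y -> P (a *: x + y).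

(* Filtration g = F_1 g ⊃ F_2 g ⊃ ... (only indices n >= 1 are meaningful). *)
Definition is_lie_filtration (g : lmodType K) (br : g -> g -> g)
    (F : nat -> g -> Prop) : Prop :=
  [/\ forall n, (1 <= n)%N -> is_subspace (F n),
      forall x, F 1%N x,
      forall n x, (1 <= n)%N -> F n.+1 x -> F n x
    & forall n m x y, (1 <= n)%N -> (1 <= m)%N -> F n x -> F m y ->
        F (n + m)%N (br x y)].

Definition is_rota_baxter (g : lmodType K) (br : g -> g -> g) (R : g -> g) :=
  forall x y, br (R x) (R y) = R (br (R x) y + br x (R y) + br x y).

Definition is_lie_map (g : lmodType K) (br : g -> g -> g) (A : algType K)
    (f : g -> A) : Prop :=
  forall x y, f (br x y) = f x * f y - f y * f x.

Definition is_universal_enveloping (g : lmodType K) (br : g -> g -> g)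
    (U : algType K) (i : {linear g -> U}) : Prop :=
  is_lie_map br i /\
  forall (A : algType K) (f : {linear g -> A}), is_lie_map br f ->
    exists phi : {lrmorphism U -> A},
      (forall x, phi (i x) = f x) /\
      (forall psi : {lrmorphism U -> A}, (forall x, psi (i x) = f x) ->
          forall u, psi u = phi u).

Definition in_span (V : lmodType K) (P : V -> Prop) (u : V) : Prop :=
  exists (k : nat) (c : 'I_k -> K) (v : 'I_k -> V),
    (forall j, P (v j)) /\ u = \sum_(j < k) c j *: v j.

Definition filt_gen (g : lmodType K) (F : nat -> g -> Prop) (U : lmodType K)
    (prod : seq g -> U) (n : nat) (u : U) : Prop :=
  exists s : seq (nat * g),
    [/\ s != [::],
        forall p, p \in s -> (1 <= p.1)%N /\ F p.1 p.2,
        (n <= sumn (map fst s))%N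
      & u = prod (map snd s)].

Definition Uprod (g : lmodType K) (U : algType K) (i : g -> U) (xs : seq g) : U :=
  \prod_(x <- xs) i x.

(* The star product with a = x in g: the Sweedler formula with
   Δ^2 x = x⊗1⊗1 + 1⊗x⊗1 + 1⊗1⊗x, 𝓡(1)=1, 𝓡(x)=R(x), S(R x) = - R x:
   x ⋆ b = x b + R(x) b - b R(x). *)
Definition star (g : lmodType K) (U : algType K) (i : g -> U) (R : g -> g)
    (x : g) (b : U) : U :=
  i x * b + i (R x) * b - b * i (R x).

Definition Ustar (g : lmodType K) (U : algType K) (i : g -> U) (R : g -> g)
    (xs : seq g) : U :=
  foldr (star i R) 1 xs.

Definition FU (g : lmodType K) (F : nat -> g -> Prop) (U : algType K)
    (i : g -> U) (n : nat) : U -> Prop :=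
  in_span (filt_gen F (Uprod i) n).

Definition FUR (g : lmodType K) (F : nat -> g -> Prop) (U : algType K)
    (i : g -> U) (R : g -> g) (n : nat) : U -> Prop :=
  in_span (filt_gen F (Ustar i R) n).

End Defs.

(* Both filtrations are spanned by words in elements of the filtration of g,
   and the two kinds of words are related by
     x ⋆ b = x b + [R x, b],  i.e.  x b = x ⋆ b - [R x, b].
   Since R preserves the filtration, the first identity shows that ⋆-words of
   weight n lie in F_n U(g).  For the converse one inducts on the length of an
   ordinary word: the commutator [R x, b] of R x ∈ F_m g with a word b of
   length k and weight d expands, by the Leibniz rule and [i y, i z] = i [y, z],
   into words of length k and weight d + m, which lie in F_{d+m} U(g_R) by
   induction. *)
From mathcomp Require Import all_boot all_order all_algebra zify.
Import GRing.Theory.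
Local Open Scope ring_scope.

Section Span.
Variables (K : fieldType) (V : lmodType K).
Implicit Types (P : V -> Prop) (u w : V).

Lemma in_span0 P : in_span P 0.
Proof.
exists 0%N, (fun _ => 0), (fun _ => 0); split; first by case.
by rewrite big_ord0.
Qed.

Lemma in_span_gen P u : P u -> in_span P u.
Proof.
move=> Pu; exists 1%N, (fun _ => 1), (fun _ => u); split=> //.
by rewrite big_ord1 scale1r.
Qed.

Lemma in_spanZ P a u : in_span P u -> in_span P (a *: u).
Proof.
case=> k [c [v [Pv ->]]]; exists k, (fun j => a * c j), v; split=> //.
by rewrite scaler_sumr; apply: eq_bigr => j _; rewrite scalerA.
Qed.

Lemma in_spanD P u w : in_span P u -> in_span P w -> in_span P (u + w).
Proof.
case=> k1 [c1 [v1 [Pv1 ->]]] [k2 [c2 [v2 [Pv2 ->]]]].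
pose glue T (f1 : 'I_k1 -> T) (f2 : 'I_k2 -> T) (j : 'I_(k1 + k2)) :=
  match split j with inl a => f1 a | inr b => f2 b end.
exists (k1 + k2)%N, (glue _ c1 c2), (glue _ v1 v2); split.
  by move=> j; rewrite /glue; case: (split j).
rewrite big_split_ord /glue; congr (_ + _); apply: eq_bigr => j _.
  by rewrite (unsplitK (inl j)).
by rewrite (unsplitK (inr j)).
Qed.

Lemma in_spanB P u w : in_span P u -> in_span P w -> in_span P (u - w).
Proof. by move=> Pu Pw; rewrite -scaleN1r; apply/in_spanD/in_spanZ. Qed.

End Span.

Lemma in_span_map (K : fieldType) (V W : lmodType K) (P : V -> Prop)
    (Q : W -> Prop) (f : V -> W) :
  {morph f : u w / u + w} -> scalable f ->
  (forall u, P u -> in_span Q (f u)) -> forall u, in_span P u -> in_span Q (f u).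
Proof.
move=> fD fZ fP _ [k [c [v [Pv ->]]]]; elim: k c v Pv => [|k IHk] c v Pv.
  by rewrite big_ord0 -(scale0r (0 : V)) fZ scale0r; apply: in_span0.
rewrite big_ord_recr fD fZ; apply: in_spanD; first exact: IHk.
exact/in_spanZ/fP.
Qed.

Lemma in_span_trans (K : fieldType) (V : lmodType K) (P Q : V -> Prop) :
  (forall u, P u -> in_span Q u) -> forall u, in_span P u -> in_span Q u.
Proof. by move=> PQ; apply: (@in_span_map K V V P Q id). Qed.

Lemma commutator_mulr (K : fieldType) (A : algType K) (a b c : A) :
  a * (b * c) - b * c * a = (a * b - b * a) * c + b * (a * c - c * a).
Proof. by rewrite mulrBl mulrBr !mulrA addrA subrK. Qed.

Section Filtration.
Variables (K : fieldType) (g : lmodType K) (F : nat -> g -> Prop).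

Definition filtered_seq (s : seq (nat * g)) : Prop :=
  forall p, p \in s -> (1 <= p.1)%N /\ F p.1 p.2.

Definition weight (s : seq (nat * g)) : nat := sumn (map fst s).

Lemma filtered_seq_cons m x s :
  filtered_seq ((m, x) :: s) <-> [/\ (1 <= m)%N, F m x & filtered_seq s].
Proof.
split=> [Fs | [m_gt0 Fx Fs] p].
  have [m_gt0 Fx] := Fs (m, x) (mem_head _ _).
  by split=> // p ps; apply: Fs; rewrite inE ps orbT.
by rewrite inE => /predU1P [-> //|]; apply: Fs.
Qed.

Lemma filtered_seq_rcons m x s :
  (1 <= m)%N -> F m x -> filtered_seq s -> filtered_seq (rcons s (m, x)).
Proof.
move=> m_gt0 Fx Fs p; rewrite mem_rcons => ps.
by apply: (iffRL (filtered_seq_cons m x s)) ps.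
Qed.

Lemma filt_gen_span_mono {V : lmodType K} {prod : seq g -> V} {m n u} :
  (m <= n)%N -> in_span (filt_gen F prod n) u -> in_span (filt_gen F prod m) u.
Proof.
move=> le_mn; apply: in_span_trans => _ [s [s_nil Fs le_ns ->]].
by apply: in_span_gen; exists s; split=> //; apply: leq_trans le_ns.
Qed.

Variables (U : algType K) (i : g -> U) (R : g -> g).

Lemma Uprod_cons x xs : Uprod i (x :: xs) = i x * Uprod i xs.
Proof. by rewrite /Uprod big_cons. Qed.

Lemma Uprod_rcons x xs : Uprod i (rcons xs x) = Uprod i xs * i x.
Proof. by rewrite /Uprod -cats1 big_cat big_seq1. Qed.

Lemma Uprod1 x : Uprod i [:: x] = i x.
Proof. by rewrite /Uprod big_seq1. Qed.

Lemma Ustar1 x : Ustar i R [:: x] = i x.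
Proof. by rewrite /Ustar /= /star !mulr1 mul1r addrK. Qed.

Lemma star_additive x : {morph star i R x : u w / u + w}.
Proof.
move=> u w; rewrite /star !mulrDr mulrDl !opprD -!addrA; congr (_ + _).
rewrite addrCA; congr (_ + _).
by rewrite [RHS]addrCA; congr (_ + _); rewrite addrCA.
Qed.

Lemma star_scalable x : scalable (star i R x).
Proof. by move=> a u; rewrite /star -!scalerAr -scalerAl scalerBr scalerDr. Qed.

Lemma mul_star x b : i x * b = star i R x b - (i (R x) * b - b * i (R x)).
Proof. by rewrite /star -[i x * b + _ - _]addrA addrK. Qed.

Section Inclusion_FUR_FU.
Hypothesis R_filt : forall n x, (1 <= n)%N -> F n x -> F n (R x).

Lemma FU_mull m x d u : (1 <= m)%N -> F m x ->
  FU F i d u -> FU F i (m + d) (i x * u).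
Proof.
move=> m_gt0 Fx; apply: in_span_map => [v w|a v|_ [s [s_nil Fs le_ds ->]]].
- exact: mulrDr.
- by rewrite scalerAr.
apply: in_span_gen; exists ((m, x) :: s); split=> //.
- exact/filtered_seq_cons.
- by rewrite /= leq_add2l.
- by rewrite Uprod_cons.
Qed.

Lemma FU_mulr m x d u : (1 <= m)%N -> F m x ->
  FU F i d u -> FU F i (m + d) (u * i x).
Proof.
move=> m_gt0 Fx.
apply: (@in_span_map _ _ _ _ _ (fun v => v * i x))
  => [v w|a v|_ [s [s_nil Fs le_ds ->]]].
- exact: mulrDl.
- by rewrite scalerAl.
apply: in_span_gen; exists (rcons s (m, x)); split.
- by case: (s).
- exact: filtered_seq_rcons.
- by rewrite map_rcons sumn_rcons /=; lia.
- by rewrite map_rcons Uprod_rcons.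
Qed.

Lemma FU_star m x d b : (1 <= m)%N -> F m x ->
  FU F i d b -> FU F i (m + d) (star i R x b).
Proof.
move=> m_gt0 Fx FUb; have FRx := R_filt _ _ m_gt0 Fx.
by apply: in_spanB; first apply: in_spanD;
  [exact: FU_mull | exact: FU_mull | exact: FU_mulr].
Qed.

Lemma FU_Ustar s : s != [::] -> filtered_seq s ->
  FU F i (weight s) (Ustar i R (map snd s)).
Proof.
elim: s => [//|[m x] s IHs] _ /filtered_seq_cons [m_gt0 Fx Fs].
case: s => [|p s] in IHs Fs *.
  rewrite Ustar1; apply: in_span_gen; exists [:: (m, x)]; split=> //.
    by move=> p; rewrite inE => /eqP ->.
  by rewrite Uprod1.
exact/FU_star/IHs.
Qed.

End Inclusion_FUR_FU.

Definition Uprod_gen (k d : nat) (u : U) : Prop :=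
  exists t, [/\ filtered_seq t, size t = k, (d <= weight t)%N
              & u = Uprod i (map snd t)].

Section Inclusion_FU_FUR.
Variable br : g -> g -> g.
Hypothesis i_lie : is_lie_map br i.
Hypothesis F_br : forall n m x y, (1 <= n)%N -> (1 <= m)%N -> F n x -> F m y ->
  F (n + m) (br x y).
Hypothesis R_filt : forall n x, (1 <= n)%N -> F n x -> F n (R x).

Lemma Uprod_commutator m y s : (1 <= m)%N -> F m y -> filtered_seq s ->
  in_span (Uprod_gen (size s) (weight s + m))
    (i y * Uprod i (map snd s) - Uprod i (map snd s) * i y).
Proof.
move=> m_gt0 Fy; elim: s => [|[n z] s IHs].
  by rewrite /Uprod big_nil mulr1 mul1r subrr => _; apply: in_span0.
move=> /filtered_seq_cons [n_gt0 Fz Fs] /=.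
rewrite Uprod_cons commutator_mulr -i_lie; apply: in_spanD.
  apply: in_span_gen; exists (((m + n)%N, br y z) :: s); split=> /=.
  - by apply/filtered_seq_cons; split=> //; [lia | exact: F_br].
  - by [].
  - by rewrite /weight /=; lia.
  - by rewrite Uprod_cons.
apply: in_span_map (IHs Fs) => [v w|a v|_ [t [Ft st le_dt ->]]].
- exact: mulrDr.
- by rewrite scalerAr.
apply: in_span_gen; exists ((n, z) :: t); split=> /=.
- exact/filtered_seq_cons.
- by rewrite st.
- by rewrite /weight /= in le_dt *; lia.
- by rewrite Uprod_cons.
Qed.

Lemma FUR_star m x d b : (1 <= m)%N -> F m x ->
  FUR F i R d b -> FUR F i R (m + d) (star i R x b).
Proof.
move=> m_gt0 Fx; apply: in_span_map.
- exact: star_additive.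
- exact: star_scalable.
move=> _ [s [s_nil Fs le_ds ->]]; apply: in_span_gen.
exists ((m, x) :: s); split=> //.
- exact/filtered_seq_cons.
- by rewrite /= leq_add2l.
Qed.

Lemma Uprod_gen_FUR k d u : in_span (Uprod_gen k.+1 d) u -> FUR F i R d u.
Proof.
elim: k d u => [|k IHk] d u; apply: in_span_trans => _ [t [Ft st le_dt ->]];
  case: t st Ft le_dt => [//|[m x] t] [st] /filtered_seq_cons [m_gt0 Fx Ft] le_dt.
  move/size0nil in st; subst t; rewrite Uprod1 -(Ustar1 x).
  apply: in_span_gen; exists [:: (m, x)]; split=> //.
  by move=> p; rewrite inE => /eqP ->.
have FUR_t : FUR F i R (weight t) (Uprod i (map snd t)).
  by apply: IHk; apply: in_span_gen; exists t.
apply: filt_gen_span_mono le_dt _.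
have -> : weight ((m, x) :: t) = (weight t + m)%N by rewrite addnC.
rewrite /= Uprod_cons mul_star.
apply: in_spanB; first by rewrite addnC; apply: FUR_star.
apply: IHk; rewrite -st.
by apply: Uprod_commutator => //; apply: R_filt.
Qed.

End Inclusion_FU_FUR.

End Filtration.

Arguments FU_Ustar {K g F U i R} R_filt {s}.
Arguments Uprod_gen_FUR {K g F U i R br} i_lie F_br R_filt {k d u}.

Theorem proposition4p10 (K : fieldType) (pchar0 : [pchar K] =i pred0)
    (g : lmodType K) (br : g -> g -> g) (F : nat -> g -> Prop)
    (R : {linear g -> g})
    (Hlie : is_lie_bracket br)
    (HF : is_lie_filtration br F)
    (HRB : is_rota_baxter br R)
    (HRF : forall n x, (1 <= n)%N -> F n x -> F n (R x))
    (U : algType K) (i : {linear g -> U})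
    (HU : is_universal_enveloping br i) :
  forall n : nat, (1 <= n)%N ->
    forall u : U, FU F i n u <-> FUR F i R n u.
Proof.
move=> n _ u; have [i_lie _] := HU; have [_ _ _ F_br] := HF.
split; apply: in_span_trans => _ [s [s_nil Fs le_ns ->]].
  case: s s_nil => [//|p s] _ in Fs le_ns *.
  apply: (Uprod_gen_FUR i_lie F_br HRF (k := size s)).
  by apply: in_span_gen; exists (p :: s).
exact: filt_gen_span_mono le_ns (FU_Ustar HRF s_nil Fs).
Qed.
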